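(* Let $g\ge1$ and $n\ge 3$. In $B_n(\Sigma_g)/\Gamma_3(B_n(\Sigma_g))$ all the classes of $\sigma_1,\dots,\sigma_{n-1}$ coincide; call this class $\sigma$, and denote the classes of $a_i,b_i$ again by $a_i,b_i$. Then $B_n(\Sigma_g)/\Gamma_3(B_n(\Sigma_g))$ is isomorphic to a semidirect product $(\mathbb{Z}\times\mathbb{Z}^g)\rtimes\mathbb{Z}^g$, where the first factor $\mathbb{Z}$ is central and generated by $\sigma$, the factor $\mathbb{Z}^g$ is (freely abelian) generated by $a_1,\dots,a_g$, and the acting factor $\mathbb{Z}^g$ is generated by $b_1,\dots,b_g$, the action being given by $b_j a_l b_j^{-1}=a_l$ for $l\neq j$ and $b_j a_j b_j^{-1}=\sigma^{-2}a_j$ (and $b_j\sigma b_j^{-1}=\sigma$). In particular it is a central extension of $\mathbb{Z}^{2g}$ by $\mathbb{Z}$, and every element can be written uniquely as $\sigma^p\prod_{i=1}^g a_i^{m_i}\prod_{i=1}^g b_i^{n_i}$ with $p,m_i,n_i\in\mathbb{Z}$.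
   Context: $\Sigma_g$ is a compact connected orientable surface of genus $g\ge1$ with one boundary component; $B_n(\Sigma_g)=\pi_1(F_n(\Sigma_g)/S_n)$ where $F_n(\Sigma_g)$ is the space of ordered $n$-tuples of distinct points. $\Gamma_1(G)=G$, $\Gamma_i(G)=[G,\Gamma_{i-1}(G)]$. $B_n(\Sigma_g)$ has the presentation with generators $\sigma_1,\dots,\sigma_{n-1},a_1,b_1,\dots,a_g,b_g$ and relations: $\sigma_i\sigma_j=\sigma_j\sigma_i$ for $|i-j|\ge2$; $\sigma_i\sigma_{i+1}\sigma_i=\sigma_{i+1}\sigma_i\sigma_{i+1}$ for $1\le i\le n-2$; $c\,\sigma_j=\sigma_j c$ for $c\in\{a_i,b_i\}$, $j\ge2$; $c\sigma_1c\sigma_1=\sigma_1c\sigma_1c$ for $c\in\{a_i,b_i\}$; $a_i\sigma_1b_i=\sigma_1b_i\sigma_1a_i\sigma_1$; $c_i(\sigma_1^{-1}c_j\sigma_1)=(\sigma_1^{-1}c_j\sigma_1)c_i$ for $c_i\in\{a_i,b_i\}$, $c_j\in\{a_j,b_j\}$, $1\le j<i\le g$. *)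

From HB Require Import structures.
From mathcomp Require Import all_boot all_order all_algebra.
Set Implicit Arguments. Unset Strict Implicit. Unset Printing Implicit Defensive.
Import Order.TTheory GRing.Theory Num.Theory.

(* Generators of B_n(Sigma_g), 0-based indices:                         *)
(*   Sig i  (i : 'I_n.-1)  is  sigma_{i+1}                               *)
(*   A k, B k (k : 'I_g)   are a_{k+1}, b_{k+1}                           *)
(* A letter is a generator together with an exponent sign              *)
(* (false = +1, true = -1); words are elements of the free monoid on    *)
(* letters, i.e. (unreduced) words in the free group on the generators. *)
Inductive gen (n g : nat) : Type :=
| Sig of 'I_n.-1
| A of 'I_g
| B of 'I_g.

Definition letter (n g : nat) : Type := (gen n g * bool)%type.
Definition word (n g : nat) : Type := seq (letter n g).

Definition pos n g (x : gen n g) : letter n g := (x, false).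
Definition neg n g (x : gen n g) : letter n g := (x, true).

Definition winv n g (w : word n g) : word n g :=
  rev (map (fun l : letter n g => (l.1, ~~ l.2)) w).

Definition wcomm n g (u v : word n g) : word n g :=
  winv u ++ winv v ++ u ++ v.

Inductive braid_rel (n g : nat) : word n g -> word n g -> Prop :=
| R_far (i j : 'I_n.-1) : ((i:nat).+2 <= j)%N \/ ((j:nat).+2 <= i)%N ->
    braid_rel [:: pos (Sig g i); pos (Sig g j)] [:: pos (Sig g j); pos (Sig g i)]
| R_braid (i j : 'I_n.-1) : (j:nat) = i.+1 ->
    braid_rel [:: pos (Sig g i); pos (Sig g j); pos (Sig g i)]
              [:: pos (Sig g j); pos (Sig g i); pos (Sig g j)]
| R_commA (k : 'I_g) (j : 'I_n.-1) : (1 <= j)%N ->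
    braid_rel [:: pos (A n k); pos (Sig g j)] [:: pos (Sig g j); pos (A n k)]
| R_commB (k : 'I_g) (j : 'I_n.-1) : (1 <= j)%N ->
    braid_rel [:: pos (B n k); pos (Sig g j)] [:: pos (Sig g j); pos (B n k)]
| R_csc (c : gen n g) (s1 : 'I_n.-1) : (s1:nat) = 0%N ->
    (exists k, c = A n k \/ c = B n k) ->
    braid_rel [:: pos c; pos (Sig g s1); pos c; pos (Sig g s1)]
              [:: pos (Sig g s1); pos c; pos (Sig g s1); pos c]
| R_ab (k : 'I_g) (s1 : 'I_n.-1) : (s1:nat) = 0%N ->
    braid_rel [:: pos (A n k); pos (Sig g s1); pos (B n k)]
              [:: pos (Sig g s1); pos (B n k); pos (Sig g s1); pos (A n k); pos (Sig g s1)]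
| R_cc (ci cj : gen n g) (i j : 'I_g) (s1 : 'I_n.-1) : (s1:nat) = 0%N ->
    (j < i)%N -> (ci = A n i \/ ci = B n i) -> (cj = A n j \/ cj = B n j) ->
    braid_rel [:: pos ci; neg (Sig g s1); pos cj; pos (Sig g s1)]
              [:: neg (Sig g s1); pos cj; pos (Sig g s1); pos ci].

(* The congruence on words whose quotient is B_n(Sigma_g)/Gamma_3:
   free cancellation, the braid relations, and triviality of all
   [[u,v],w] (these normally generate Gamma_3 of the free group). *)
Inductive weq (n g : nat) : word n g -> word n g -> Prop :=
| weq_refl u : weq u u
| weq_sym u v : weq u v -> weq v u
| weq_trans u v w : weq u v -> weq v w -> weq u w
| weq_cat u u' v v' : weq u u' -> weq v v' -> weq (u ++ v) (u' ++ v')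
| weq_cancel (x : gen n g) (b : bool) : weq [:: (x, b); (x, ~~ b)] [::]
| weq_rel u v : braid_rel u v -> weq u v
| weq_gamma3 u v w : weq (wcomm (wcomm u v) w) [::].

(* The semidirect product (Z x Z^g) x| Z^g.  An element (p, m, k)       *)
(* stands for sigma^p prod_i a_i^(m i) prod_i b_i^(k i); the action     *)
(* b_j a_j b_j^-1 = sigma^-2 a_j, b_j a_l b_j^-1 = a_l (l <> j),        *)
(* sigma central, gives the multiplication below.                       *)
Definition SD (g : nat) : Type := (int * {ffun 'I_g -> int} * {ffun 'I_g -> int})%type.

Definition sd_one g : SD g := (0%R, [ffun => 0%R], [ffun => 0%R]).

Definition sd_mul g (x y : SD g) : SD g :=
  let: (p, m, k) := x in let: (p', m', k') := y in
  ((p + p' - 2 * \sum_(i < g) k i * m' i)%R,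
   [ffun i => (m i + m' i)%R], [ffun i => (k i + k' i)%R]).

Definition sd_inv g (x : SD g) : SD g :=
  let: (p, m, k) := x in
  ((- p - 2 * \sum_(i < g) k i * m i)%R, [ffun i => (- m i)%R], [ffun i => (- k i)%R]).

Definition sd_sigma g : SD g := (1%R, [ffun => 0%R], [ffun => 0%R]).
Definition sd_a g (j : 'I_g) : SD g := (0%R, [ffun i => Posz (i == j : nat)], [ffun => 0%R]).
Definition sd_b g (j : 'I_g) : SD g := (0%R, [ffun => 0%R], [ffun i => Posz (i == j : nat)]).

Definition sd_gen n g (x : gen n g) : SD g :=
  match x with Sig _ => sd_sigma g | A j => sd_a j | B j => sd_b j end.

Definition sd_letter n g (l : letter n g) : SD g :=
  if l.2 then sd_inv (sd_gen l.1) else sd_gen l.1.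

Definition sd_eval n g (w : word n g) : SD g :=
  foldr (fun l acc => sd_mul (sd_letter l) acc) (sd_one g) w.

(* 1. SD g is a group of nilpotency class 2 (its commutators are central),
      and every defining relation of G holds there, so evaluation is well
      defined on G (soundness, [sd_eval_weq]).
   2. A small calculus of words up to =w: cancellation, commuting and central
      words, powers x^z of generators, blocks prod_i (X i)^(m i), and
      "twisted" commutation x y = s^e y x relative to a central generator s.
   3. From the braid relations (n >= 3): all sigma_i coincide with a central
      sigma, distinct-index generators commute, and a_j b_j = sigma^2 b_j a_j.
   4. Hence every word is equivalent to the normal form
      sigma^p prod a_i^(m i) prod b_i^(k i) of its value ([weq_nf]), while the
      normal form of h evaluates to h ([sd_eval_nf]).  Injectivity and
      surjectivity of evaluation follow at once. *)

From HB Require Import structures.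
From mathcomp Require Import all_boot all_order all_algebra.
From mathcomp Require Import ring zify.
From Stdlib Require Import Setoid Morphisms.
Set Implicit Arguments. Unset Strict Implicit. Unset Printing Implicit Defensive.
Import Order.TTheory GRing.Theory Num.Theory.
Local Open Scope ring_scope.

Lemma sd_eq g (p p' : int) (m m' k k' : {ffun 'I_g -> int}) :
  p = p' -> (forall i, m i = m' i) -> (forall i, k i = k' i) ->
  ((p, m, k) : SD g) = (p', m', k').
Proof. by move=> -> /ffunP -> /ffunP ->. Qed.

Lemma sd_mulE g p m k p' m' k' :
  sd_mul ((p, m, k) : SD g) (p', m', k') =
  ((p + p' - 2 * \sum_(i < g) k i * m' i,
    [ffun i => m i + m' i], [ffun i => k i + k' i]) : SD g).
Proof. by []. Qed.

Lemma sum_delta g (j : 'I_g) (f : 'I_g -> int) :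
  \sum_(i < g) Posz (i == j : nat) * f i = f j.
Proof.
by rewrite (bigD1 j) //= eqxx mul1r big1 ?addr0 // => i /negbTE ->; rewrite mul0r.
Qed.

Lemma sd_mulA g (x y z : SD g) : sd_mul x (sd_mul y z) = sd_mul (sd_mul x y) z.
Proof.
case: x => [[p m] k]; case: y => [[p' m'] k']; case: z => [[p'' m''] k''] /=.
apply: sd_eq => [|i|i]; rewrite ?ffunE ?addrA //.
have -> : \sum_(i < g) k i * [ffun i => m' i + m'' i] i =
          \sum_i k i * m' i + \sum_i k i * m'' i.
  by rewrite -big_split; apply: eq_bigr => i _; rewrite ffunE mulrDr.
have -> : \sum_(i < g) [ffun i => k i + k' i] i * m'' i =
          \sum_i k i * m'' i + \sum_i k' i * m'' i.
  by rewrite -big_split; apply: eq_bigr => i _; rewrite ffunE mulrDl.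
ring.
Qed.

Lemma sd_mul1g g (x : SD g) : sd_mul (sd_one g) x = x.
Proof.
case: x => [[p m] k] /=; apply: sd_eq => [|i|i]; rewrite ?ffunE ?add0r //.
by rewrite big1 ?mulr0 ?subr0 // => i _; rewrite ffunE mul0r.
Qed.

Lemma sd_mulg1 g (x : SD g) : sd_mul x (sd_one g) = x.
Proof.
case: x => [[p m] k] /=; apply: sd_eq => [|i|i]; rewrite ?ffunE ?addr0 //.
by rewrite big1 ?mulr0 ?subr0 // => i _; rewrite ffunE mulr0.
Qed.

Lemma sd_mulVg g (x : SD g) : sd_mul (sd_inv x) x = sd_one g.
Proof.
case: x => [[p m] k] /=; apply: sd_eq => [|i|i]; rewrite ?ffunE ?addNr //.
have -> : \sum_(i < g) [ffun i => - k i] i * m i = - \sum_i k i * m i.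
  by rewrite -sumrN; apply: eq_bigr => i _; rewrite ffunE mulNr.
ring.
Qed.

Lemma sd_mulgV g (x : SD g) : sd_mul x (sd_inv x) = sd_one g.
Proof.
case: x => [[p m] k] /=; apply: sd_eq => [|i|i]; rewrite ?ffunE ?addrN //.
have -> : \sum_(i < g) k i * [ffun i => - m i] i = - \sum_i k i * m i.
  by rewrite -sumrN; apply: eq_bigr => i _; rewrite ffunE mulrN.
ring.
Qed.

Lemma sd_mulI g (a x y : SD g) : sd_mul a x = sd_mul a y -> x = y.
Proof.
by move=> e; rewrite -(sd_mul1g x) -(sd_mulVg a) -sd_mulA e sd_mulA sd_mulVg sd_mul1g.
Qed.

Lemma sd_invK g (x : SD g) : sd_inv (sd_inv x) = x.
Proof. by apply: (@sd_mulI _ (sd_inv x)); rewrite sd_mulgV sd_mulVg. Qed.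

Lemma sd_invM g (x y : SD g) : sd_inv (sd_mul x y) = sd_mul (sd_inv y) (sd_inv x).
Proof.
apply: (@sd_mulI _ (sd_mul x y)); rewrite sd_mulgV -sd_mulA [sd_mul y _]sd_mulA.
by rewrite sd_mulgV sd_mul1g sd_mulgV.
Qed.

(* The commutator x^-1 y^-1 x y; it only has a sigma-component, so it is
   central and all triple commutators vanish. *)
Definition sd_comm g (x y : SD g) : SD g :=
  sd_mul (sd_inv x) (sd_mul (sd_inv y) (sd_mul x y)).

Definition sd_central g (x : SD g) : Prop :=
  (forall i, x.1.2 i = 0) /\ (forall i, x.2 i = 0).

Lemma sd_central_comm g (x y : SD g) : sd_central x -> sd_mul x y = sd_mul y x.
Proof.
case: x => [[p m] k] [/= m0 k0]; case: y => [[p' m'] k'] /=.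
apply: sd_eq => [|i|i]; rewrite ?ffunE 1?addrC //.
rewrite !big1 => [|i _|i _]; rewrite ?m0 ?k0 ?mulr0 ?mul0r //; ring.
Qed.

Lemma sd_comm_central g (x y : SD g) : sd_central (sd_comm x y).
Proof.
case: x => [[p m] k]; case: y => [[p' m'] k'].
by split=> i /=; rewrite !ffunE /= ?ffunE; ring.
Qed.

Lemma sd_comm3 g (x y z : SD g) : sd_comm (sd_comm x y) z = sd_one g.
Proof.
rewrite /sd_comm -/(sd_comm x y) (sd_central_comm _ (sd_comm_central x y)).
by rewrite [sd_mul (sd_inv z) _]sd_mulA sd_mulVg sd_mul1g sd_mulVg.
Qed.

Definition sgn (b : bool) : int := if b then -1 else 1.

Section Letters.
Variables n g : nat.
Implicit Types (x : SD g) (b : bool).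

Lemma sd_mul_sig (i : 'I_n.-1) b x :
  sd_mul (sd_letter (Sig g i, b)) x = ((sgn b + x.1.1, x.1.2, x.2) : SD g).
Proof.
case: x => [[p m] k]; rewrite /sd_letter /=.
case: b; apply: sd_eq => [|l|l] //=; rewrite ?ffunE ?add0r //.
- by rewrite !big1 => [|l _|l _]; rewrite ?ffunE ?mul0r //; ring.
- by rewrite big1 => [|l _]; rewrite ?ffunE ?mul0r //; ring.
Qed.

Lemma sd_mul_a (j : 'I_g) b x :
  sd_mul (sd_letter (A n j, b)) x =
  ((x.1.1, [ffun l => sgn b * Posz (l == j : nat) + x.1.2 l], x.2) : SD g).
Proof.
case: x => [[p m] k]; rewrite /sd_letter /=.
case: b; apply: sd_eq => [|l|l] //=; rewrite ?ffunE ?add0r //.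
- by rewrite !big1 => [|l _|l _]; rewrite ?ffunE ?mul0r //; ring.
- by ring.
- by rewrite big1 => [|l _]; rewrite ?ffunE ?mul0r //; ring.
- by ring.
Qed.

Lemma sd_mul_b (j : 'I_g) b x :
  sd_mul (sd_letter (B n j, b)) x =
  ((x.1.1 - 2 * (sgn b * x.1.2 j), x.1.2,
    [ffun l => sgn b * Posz (l == j : nat) + x.2 l]) : SD g).
Proof.
case: x => [[p m] k]; rewrite /sd_letter /=.
case: b; apply: sd_eq => [|l|l] //=; rewrite ?ffunE ?add0r //.
- rewrite big1 => [|l _]; last by rewrite !ffunE mulr0.
  have -> : \sum_(i < g) [ffun i => - [ffun i0 => Posz (i0 == j : nat)] i] i * m i = - m j.
    by rewrite -(sum_delta j m) -sumrN; apply: eq_bigr => i _; rewrite !ffunE mulNr.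
  ring.
- by ring.
- by rewrite -(sum_delta j m) mul1r; congr (_ - 2 * _); apply: eq_bigr => i _; rewrite ffunE.
- by rewrite mul1r.
Qed.
End Letters.

Arguments sd_mul : simpl never.

Lemma winv_cat n g (u v : word n g) : winv (u ++ v) = winv v ++ winv u.
Proof. by rewrite /winv map_cat rev_cat. Qed.

Lemma winvK n g (u : word n g) : winv (winv u) = u.
Proof.
rewrite /winv map_rev revK -map_comp.
by elim: u => [|[x b] u IH] //=; rewrite negbK IH.
Qed.

Lemma sd_eval_cons n g (l : letter n g) (u : word n g) :
  sd_eval (l :: u) = sd_mul (sd_letter l) (sd_eval u).
Proof. by []. Qed.

Lemma sd_eval1 n g (l : letter n g) : sd_eval [:: l] = sd_letter l.
Proof. exact: sd_mulg1. Qed.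

Lemma sd_eval0 n g : sd_eval ([::] : word n g) = ((0, [ffun => 0], [ffun => 0]) : SD g).
Proof. by []. Qed.

Lemma sd_eval_cat n g (u v : word n g) :
  sd_eval (u ++ v) = sd_mul (sd_eval u) (sd_eval v).
Proof.
elim: u => [|l u IH]; first by rewrite -[sd_eval [::]]/(sd_one g) sd_mul1g.
by rewrite cat_cons !sd_eval_cons IH sd_mulA.
Qed.

Lemma sd_letterN n g (x : gen n g) b :
  sd_letter (x, ~~ b) = sd_inv (sd_letter (x, b)).
Proof. by case: b; rewrite /sd_letter /= ?sd_invK. Qed.

Lemma sd_eval_inv n g (u : word n g) : sd_eval (winv u) = sd_inv (sd_eval u).
Proof.
elim: u => [|[x b] u IH]; first by rewrite /= -{1}(sd_mulVg (sd_one g)) sd_mulg1.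
by rewrite -cat1s winv_cat !sd_eval_cat IH !sd_eval1 sd_letterN sd_invM.
Qed.

Lemma sd_eval_comm n g (u v : word n g) :
  sd_eval (wcomm u v) = sd_comm (sd_eval u) (sd_eval v).
Proof. by rewrite /wcomm !sd_eval_cat !sd_eval_inv. Qed.

Ltac sd_compute :=
  rewrite !sd_eval_cons sd_eval0 /pos /neg;
  do ![rewrite sd_mul_sig | rewrite sd_mul_a | rewrite sd_mul_b] => /=;
  apply: sd_eq => [|?|?]; rewrite ?ffunE ?eqxx /=.

(* Every defining relation holds in SD g; the two braid relations among the
   sigma_i hold by computation since all sigma_i evaluate to sigma. *)
Lemma sd_eval_rel n g (u v : word n g) : braid_rel u v -> sd_eval u = sd_eval v.
Proof.
case=> {u v} //.
- by move=> k j _; sd_compute; ring.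
- by move=> k j _; sd_compute; ring.
- by move=> c s1 _ [k [->|->]]; sd_compute; ring.
- by move=> k s1 _; sd_compute; ring.
- move=> ci cj i j s1 _ lt_ji [->|->] [->|->].
  all: have /negbTE ne_ij : i != j by rewrite neq_ltn lt_ji orbT.
  all: have ne_ji : (j == i) = false by rewrite eq_sym.
  all: by sd_compute; rewrite ?ne_ij ?ne_ji /=; ring.
Qed.

Lemma sd_eval_weq n g (u v : word n g) : weq u v -> sd_eval u = sd_eval v.
Proof.
elim=> {u v} [u|u v _ ->|u v w _ -> _ ->|u u' v v' _ eu _ ev|x b|u v /sd_eval_rel|u v w]
  //; first by rewrite !sd_eval_cat eu ev.
- by rewrite sd_eval_cons sd_eval1 sd_letterN sd_mulgV.
- by rewrite !sd_eval_comm sd_comm3.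
Qed.

Notation "u =w v" := (weq u v) (at level 70).

#[export] Instance weq_equiv n g : Equivalence (@weq n g).
Proof. split; [exact: weq_refl | exact: weq_sym | exact: weq_trans]. Qed.

#[export] Instance cat_proper n g :
  Proper (@weq n g ==> @weq n g ==> @weq n g) (@cat (letter n g)).
Proof. by move=> u u' hu v v' hv; apply: weq_cat. Qed.

#[export] Instance cons_proper n g :
  Proper (eq ==> @weq n g ==> @weq n g) (@cons (letter n g)).
Proof. by move=> l _ <- u v h; apply: (weq_cat (weq_refl [:: l]) h). Qed.

#[export] Hint Resolve weq_refl : core.

Section WordCalculus.
Variables n g : nat.
Implicit Types (u v w y : word n g) (x : gen n g) (l : letter n g).

Lemma weq_catV u : u ++ winv u =w [::].
Proof.
elim: u => [|[x b] u IH]; first exact: weq_refl.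
rewrite -cat1s winv_cat -catA (catA u) IH; exact: weq_cancel.
Qed.

Lemma weq_cancel_pn x w : pos x :: neg x :: w =w w.
Proof. exact: (weq_cat (weq_cancel x false) (weq_refl w)). Qed.

Lemma weq_cancel_np x w : neg x :: pos x :: w =w w.
Proof. exact: (weq_cat (weq_cancel x true) (weq_refl w)). Qed.

Lemma weq_Vcat u : winv u ++ u =w [::].
Proof. by rewrite -{2}(winvK u) weq_catV. Qed.

Lemma weq_catKV u w : u ++ (winv u ++ w) =w w.
Proof. by rewrite catA weq_catV. Qed.

Lemma weq_catK u w : winv u ++ (u ++ w) =w w.
Proof. by rewrite catA weq_Vcat. Qed.

Lemma weq_catI w u v : w ++ u =w w ++ v -> u =w v.
Proof. by move=> h; rewrite -(weq_catK w u) h weq_catK. Qed.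

Lemma weq_catIr w u v : u ++ w =w v ++ w -> u =w v.
Proof. by move=> h; rewrite -(cats0 u) -(cats0 v) -(weq_catV w) !catA h. Qed.

Lemma weq_winv u v : u =w v -> winv u =w winv v.
Proof. by move=> h; apply: (@weq_catI u); rewrite weq_catV h weq_catV. Qed.

Definition wc u v : Prop := u ++ v =w v ++ u.
Definition central u : Prop := forall v, wc u v.

Lemma wc_sym u v : wc u v -> wc v u.
Proof. by rewrite /wc => ->. Qed.

Lemma wc_catr u v w : wc u v -> wc u w -> wc u (v ++ w).
Proof. by rewrite /wc => h1 h2; rewrite catA h1 -catA h2 catA. Qed.

Lemma wc_invr u v : wc u v -> wc u (winv v).
Proof.
rewrite /wc => h.
by rewrite -{1}(weq_catK v (u ++ winv v)) (catA v u) -h -(catA u v) weq_catV cats0.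
Qed.

Lemma wc_invl u v : wc u v -> wc (winv u) v.
Proof. by move=> h; apply/wc_sym/wc_invr/wc_sym. Qed.

Lemma central_inv u : central u -> central (winv u).
Proof. by move=> h v; apply: wc_invl. Qed.

(* Since [[u,v],w] = 1, every commutator is central. *)
Lemma central_comm u v : central (wcomm u v).
Proof.
move=> w; have c3 := weq_gamma3 u v w; move: (wcomm u v) c3 => c c3.
apply: (@weq_catI (winv c ++ winv w)); rewrite -catA; apply: weq_trans c3 _.
by rewrite -catA weq_catK weq_Vcat.
Qed.

Lemma weq_swap u v : u ++ v =w v ++ u ++ wcomm u v.
Proof. by rewrite /wcomm weq_catKV weq_catKV. Qed.
End WordCalculus.

Lemma int_ind_pm (P : int -> Prop) : P 0 -> (forall z, P z -> P (z + 1)) ->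
  (forall z, P z -> P (z - 1)) -> forall z, P z.
Proof.
move=> P0 Ps Pp; elim/int_rect => // k h.
- by rewrite -addn1 PoszD; apply: Ps.
- by rewrite -addn1 PoszD opprD; apply: Pp.
Qed.

Definition pw n g (x : gen n g) (z : int) : word n g :=
  match z with Posz k => nseq k (pos x) | Negz k => nseq k.+1 (neg x) end.

Section Powers.
Variables n g : nat.
Implicit Types (x y : gen n g) (u v : word n g).

Lemma pw_letter x b : [:: (x, b)] = pw x (sgn b).
Proof. by case: b. Qed.

Lemma pw_succ x z : pw x (z + 1) =w pos x :: pw x z.
Proof.
case: z => [k|[|k]]; first by rewrite -PoszD addn1.
- by rewrite /= weq_cancel_pn.
- have -> : Negz k.+1 + 1 = Negz k by rewrite !NegzE; lia.
  by rewrite /= weq_cancel_pn.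
Qed.

Lemma pw_pred x z : pw x (z - 1) =w neg x :: pw x z.
Proof.
case: z => [[|k]|k] //.
- have -> : Posz k.+1 - 1 = Posz k by lia.
  by rewrite /= weq_cancel_np.
- by have -> : Negz k - 1 = Negz k.+1 by rewrite !NegzE; lia.
Qed.

Lemma pw_add x z1 z2 : pw x (z1 + z2) =w pw x z1 ++ pw x z2.
Proof.
elim/int_ind_pm: z1 => [|z IH|z IH]; first by rewrite add0r.
- by rewrite addrAC !pw_succ IH.
- by rewrite addrAC !pw_pred IH.
Qed.

Lemma wc_pw u x z : wc u [:: pos x] -> wc u (pw x z).
Proof.
have nseqP l k : wc u [:: l] -> wc u (nseq k l).
  move=> hl; elim: k => [|k IH]; first by rewrite /wc cats0.
  exact: (wc_catr hl IH).
by move=> h; case: z => k; apply: nseqP; last apply: (wc_invr h).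
Qed.

Lemma wc_pw2 x y z1 z2 : wc [:: pos x] [:: pos y] -> wc (pw x z1) (pw y z2).
Proof. by move=> h; apply/wc_pw/wc_sym/wc_pw/wc_sym. Qed.

Lemma central_pw x z : central [:: pos x] -> central (pw x z).
Proof. by move=> h v; apply/wc_sym/wc_pw/wc_sym. Qed.
End Powers.

Definition blk n g (X : 'I_g -> gen n g) (m : 'I_g -> int) (r : seq 'I_g) : word n g :=
  flatten [seq pw (X i) (m i) | i <- r].

Lemma blk_cons n g (X : 'I_g -> gen n g) m i r :
  blk X m (i :: r) = pw (X i) (m i) ++ blk X m r.
Proof. by []. Qed.

Lemma blk_eq_in n g (X : 'I_g -> gen n g) m m' r :
  {in r, m =1 m'} -> blk X m r = blk X m' r.
Proof. by move=> h; rewrite /blk; congr flatten; apply/eq_in_map => i /h ->. Qed.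

Lemma blk0 n g (X : 'I_g -> gen n g) (m : 'I_g -> int) r :
  (forall i, m i = 0) -> blk X m r = [::].
Proof. by move=> m0; elim: r => [|i r IH] //; rewrite blk_cons IH m0. Qed.

Lemma blk_shift n g (X : 'I_g -> gen n g) (m m' : 'I_g -> int) r j d :
  (forall i j, wc [:: pos (X i)] [:: pos (X j)]) -> uniq r -> j \in r ->
  (forall i, m' i = d * Posz (i == j : nat) + m i) ->
  pw (X j) d ++ blk X m r =w blk X m' r.
Proof.
move=> hX + + m'E.
rewrite (@blk_eq_in _ _ X m' (fun i => d * Posz (i == j : nat) + m i)) => [|i _ //]; clear m'E.
elim: r => [|i r IH] //= /andP[i_r r_uniq]; rewrite in_cons.
case: eqP => [ji _ | ne_ji /= j_r]; rewrite !blk_cons; first subst j.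
- rewrite catA -pw_add eqxx mulr1 (@blk_eq_in _ _ X _ m) // => l l_r /=.
  have /negbTE -> : l != i by apply: contraNneq i_r => <-.
  by rewrite mulr0 add0r.
- have /negbTE -> : i != j by apply/eqP => e; apply: ne_ji.
  by rewrite mulr0 add0r catA (wc_pw2 _ _ (hX j i)) -catA IH.
Qed.

Section Twist.
Variables (n g : nat) (s : gen n g).
Hypothesis s_central : central [:: pos s].
Implicit Types (u v x y : word n g).

Definition tw (e : int) x y : Prop := x ++ y =w pw s e ++ y ++ x.

Lemma pw_central e u v : pw s e ++ u ++ v =w u ++ pw s e ++ v.
Proof. by rewrite catA (central_pw e s_central u) -catA. Qed.

Lemma pw_cancel e u : pw s (- e) ++ pw s e ++ u =w u.
Proof. by rewrite catA -pw_add addNr. Qed.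

Lemma tw_flip e x y : tw e x y -> tw (- e) y x.
Proof. by rewrite /tw => h; rewrite h pw_cancel. Qed.

Lemma tw_invl e x y : tw e x y -> tw (- e) (winv x) y.
Proof.
move=> h; apply: (@weq_catI _ _ x).
by rewrite weq_catKV -pw_central (catA x y) h -catA pw_cancel -catA weq_catV cats0.
Qed.

Lemma tw_invr e x y : tw e x y -> tw (- e) x (winv y).
Proof. by move=> /tw_flip /tw_invl /tw_flip; rewrite opprK. Qed.

Lemma tw_catr e f x y y' : tw e x y -> tw f x y' -> tw (e + f) x (y ++ y').
Proof.
rewrite /tw => h h'.
by rewrite catA h -!catA h' -pw_central catA -pw_add.
Qed.

Lemma tw_pw e x (y : gen n g) z : tw e x [:: pos y] -> tw (e * z) x (pw y z).
Proof.
move=> hy; have hy' := tw_invr hy.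
elim/int_ind_pm: z => [|z IH|z IH]; first by rewrite /tw mulr0 cats0.
- by rewrite /tw pw_succ mulrDr mulr1 addrC; apply: tw_catr hy IH.
- by rewrite /tw pw_pred mulrBr mulr1 addrC; apply: tw_catr hy' IH.
Qed.

Lemma tw_blk (e : 'I_g -> int) x (X : 'I_g -> gen n g) m r :
  (forall i, tw (e i) x (pw (X i) (m i))) -> tw (\sum_(i <- r) e i) x (blk X m r).
Proof.
move=> h; elim: r => [|i r IH]; first by rewrite big_nil /tw cats0.
by rewrite big_cons blk_cons; apply: tw_catr.
Qed.
End Twist.

Definition nf n g (s : 'I_n.-1) (h : SD g) : word n g :=
  let: (p, m, k) := h in
  pw (Sig g s) p ++ blk (@A n g) m (index_enum 'I_g) ++ blk (@B n g) k (index_enum 'I_g).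

Lemma nfE n g (s : 'I_n.-1) p m k : nf s ((p, m, k) : SD g) =
  pw (Sig g s) p ++ blk (@A n g) m (index_enum 'I_g) ++ blk (@B n g) k (index_enum 'I_g).
Proof. by []. Qed.

Section NormalFormEvaluation.
Variables n g : nat.
Implicit Types (z : int) (r : seq 'I_g).

Lemma sd_eval_pw_sig (i : 'I_n.-1) z :
  sd_eval (pw (Sig g i) z) = ((z, [ffun => 0], [ffun => 0]) : SD g).
Proof.
elim/int_ind_pm: z => [|z IH|z IH] //.
- by rewrite (sd_eval_weq (pw_succ _ z)) sd_eval_cons sd_mul_sig IH /= addrC.
- by rewrite (sd_eval_weq (pw_pred _ z)) sd_eval_cons sd_mul_sig IH /= addrC.
Qed.

Lemma sd_eval_pw_a (j : 'I_g) z :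
  sd_eval (pw (A n j) z) = ((0, [ffun l => z * Posz (l == j : nat)], [ffun => 0]) : SD g).
Proof.
elim/int_ind_pm: z => [|z IH|z IH].
- by apply: sd_eq => // l; rewrite ffunE mul0r.
- rewrite (sd_eval_weq (pw_succ _ z)) sd_eval_cons sd_mul_a IH /=.
  by apply: sd_eq => // l; rewrite !ffunE; ring.
- rewrite (sd_eval_weq (pw_pred _ z)) sd_eval_cons sd_mul_a IH /=.
  by apply: sd_eq => // l; rewrite !ffunE; ring.
Qed.

Lemma sd_eval_pw_b (j : 'I_g) z :
  sd_eval (pw (B n j) z) = ((0, [ffun => 0], [ffun l => z * Posz (l == j : nat)]) : SD g).
Proof.
elim/int_ind_pm: z => [|z IH|z IH].
- by apply: sd_eq => // l; rewrite ffunE mul0r.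
- rewrite (sd_eval_weq (pw_succ _ z)) sd_eval_cons sd_mul_b IH /=.
  by apply: sd_eq => [|l|l]; rewrite !ffunE; ring.
- rewrite (sd_eval_weq (pw_pred _ z)) sd_eval_cons sd_mul_b IH /=.
  by apply: sd_eq => [|l|l]; rewrite !ffunE; ring.
Qed.

Lemma sd_eval_blk_a (m : 'I_g -> int) r :
  sd_eval (blk (@A n g) m r) =
  ((0, [ffun l => \sum_(i <- r) m i * Posz (l == i : nat)], [ffun => 0]) : SD g).
Proof.
elim: r => [|i r IH]; first by apply: sd_eq => // l; rewrite !ffunE big_nil.
rewrite blk_cons sd_eval_cat sd_eval_pw_a IH sd_mulE.
apply: sd_eq => [|l|l]; rewrite ?ffunE ?big_cons ?addr0 //.
by rewrite big1 ?mulr0 ?subr0 // => l _; rewrite ffunE mul0r.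
Qed.

Lemma sd_eval_blk_b (k : 'I_g -> int) r :
  sd_eval (blk (@B n g) k r) =
  ((0, [ffun => 0], [ffun l => \sum_(i <- r) k i * Posz (l == i : nat)]) : SD g).
Proof.
elim: r => [|i r IH]; first by apply: sd_eq => // l; rewrite !ffunE big_nil.
rewrite blk_cons sd_eval_cat sd_eval_pw_b IH sd_mulE.
apply: sd_eq => [|l|l]; rewrite ?ffunE ?big_cons ?addr0 //.
by rewrite big1 ?mulr0 ?subr0 // => l _; rewrite !ffunE mulr0.
Qed.

Lemma sd_eval_nf (s : 'I_n.-1) (h : SD g) : sd_eval (nf s h) = h.
Proof.
case: h => [[p m] k]; rewrite !sd_eval_cat sd_eval_pw_sig sd_eval_blk_a sd_eval_blk_b !sd_mulE.
apply: sd_eq => [|i|i]; rewrite ?ffunE.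
- by rewrite !big1 ?mulr0 ?subr0 ?addr0 // => i _; rewrite !ffunE mul0r.
- rewrite add0r addr0 -[RHS](sum_delta i m).
  by apply: eq_bigr => l _; rewrite eq_sym mulrC.
- rewrite !add0r -[RHS](sum_delta i k).
  by apply: eq_bigr => l _; rewrite eq_sym mulrC.
Qed.
End NormalFormEvaluation.

(* In a group of nilpotency class 2, x y x = y x y forces x = y. *)
Lemma sig_next n g (i j : 'I_n.-1) : j = i.+1 :> nat ->
  [:: pos (Sig g i)] =w [:: pos (Sig g j)].
Proof.
move=> ji; have braid := weq_rel (@R_braid n g i j ji).
move: braid; set x := [:: pos (Sig g i)]; set y := [:: pos (Sig g j)] => braid.
have := central_comm x y; have := weq_swap x y; move: (wcomm x y) => c xy c_central.
have xyx : x ++ y ++ x =w y ++ (x ++ x ++ c) by rewrite catA xy -!catA (c_central x).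
have yxy : y ++ x ++ y =w y ++ (y ++ x ++ c) by rewrite xy.
have : y ++ (x ++ x ++ c) =w y ++ (y ++ x ++ c) by rewrite -xyx -yxy.
by move/weq_catI; rewrite !catA => /weq_catIr /weq_catIr.
Qed.

(* Consequences of the braid relations, given sigma_1 = Sig s0 and
   sigma_2 = Sig s1 (so n >= 3). *)
Section BraidConsequences.
Variables (n g : nat) (s0 s1 : 'I_n.-1).
Hypotheses (s0_E : s0 = 0%N :> nat) (s1_E : s1 = 1%N :> nat).
Local Notation sigma := (Sig g s0).

Lemma sig_all (i : 'I_n.-1) : [:: pos (Sig g i)] =w [:: pos sigma].
Proof.
case: i => k; elim: k => [|k IH] k_lt.
  by have -> : Ordinal k_lt = s0 by apply: val_inj; rewrite /= s0_E.
by rewrite -(IH (ltnW k_lt)) (@sig_next n g (Ordinal (ltnW k_lt)) (Ordinal k_lt) erefl).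
Qed.

Lemma sig_letter (i : 'I_n.-1) b : [:: (Sig g i, b)] =w pw sigma (sgn b).
Proof. by case: b; [apply: (weq_winv (sig_all i)) | apply: sig_all]. Qed.

(* sigma_1 = sigma_2 commutes with every a_k and b_k, hence is central. *)
Lemma sigma_central : central [:: pos sigma].
Proof.
have s1_pos : (0 < s1)%N by rewrite s1_E.
have gen_wc (x : gen n g) : wc [:: pos sigma] [:: pos x].
  case: x => [i|k|k]; rewrite /wc -?(sig_all i) -?(sig_all s1) //.
  - exact: weq_sym (weq_rel (R_commA k s1_pos)).
  - exact: weq_sym (weq_rel (R_commB k s1_pos)).
move=> v; elim: v => [|[x b] v IH]; first by rewrite /wc cats0.
apply: (@wc_catr _ _ _ [:: (x, b)] _ _ IH); case: b; last exact: gen_wc.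
exact: (wc_invr (gen_wc x)).
Qed.

Lemma sigma_swap (l : letter n g) w : l :: pos sigma :: w =w pos sigma :: l :: w.
Proof. exact: weq_cat (weq_sym (sigma_central [:: l])) (weq_refl w). Qed.

Lemma sigma_conj (x : gen n g) w : neg sigma :: pos x :: pos sigma :: w =w pos x :: w.
Proof. by rewrite sigma_swap weq_cancel_np. Qed.

Lemma wc_distinct (ci cj : gen n g) (i j : 'I_g) : i != j ->
  ci = A n i \/ ci = B n i -> cj = A n j \/ cj = B n j -> wc [:: pos ci] [:: pos cj].
Proof.
have wc_lt (c c' : gen n g) (k l : 'I_g) : (l < k)%N ->
    c = A n k \/ c = B n k -> c' = A n l \/ c' = B n l -> wc [:: pos c] [:: pos c'].
  by move=> lt_lk hc hc'; have := weq_rel (R_cc s0_E lt_lk hc hc'); rewrite !sigma_conj.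
rewrite neq_ltn => /orP[lt_ij|lt_ji] hi hj; last exact: wc_lt lt_ji hi hj.
exact/wc_sym/(wc_lt _ _ _ _ lt_ij hj hi).
Qed.

Lemma wc_AA (i j : 'I_g) : wc [:: pos (A n i)] [:: pos (A n j)].
Proof.
by case: (eqVneq i j) => [-> //|ne]; apply: wc_distinct ne (or_introl _) (or_introl _).
Qed.

Lemma wc_BB (i j : 'I_g) : wc [:: pos (B n i)] [:: pos (B n j)].
Proof.
by case: (eqVneq i j) => [-> //|ne]; apply: wc_distinct ne (or_intror _) (or_intror _).
Qed.

Lemma tw_AB (j : 'I_g) : tw sigma 2 [:: pos (A n j)] [:: pos (B n j)].
Proof.
have := weq_rel (R_ab j s0_E).
rewrite !(sigma_swap (pos (A n j))) !(sigma_swap (pos (B n j))).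
exact: (@weq_catI _ _ [:: pos sigma]).
Qed.

Lemma tw_BA (j i : 'I_g) b :
  tw sigma (- (2 * (sgn b * Posz (i == j : nat)))) [:: (B n j, b)] [:: pos (A n i)].
Proof.
case: (eqVneq i j) => [->|ne].
  have ba := tw_flip (tw_AB j).
  by case: b; [exact: (tw_invl sigma_central ba) | exact: ba].
have ab : wc [:: pos (B n j)] [:: pos (A n i)].
  by apply: (wc_distinct (i := j) (j := i)); [rewrite eq_sym | right | left].
by case: b; [apply: wc_invl ab | apply: ab].
Qed.

Lemma tw_B_blkA (j : 'I_g) b (m : 'I_g -> int) :
  tw sigma (- (2 * (sgn b * m j))) [:: (B n j, b)] (blk (@A n g) m (index_enum 'I_g)).
Proof.
have -> : - (2 * (sgn b * m j)) =
          \sum_(i <- index_enum 'I_g) - (2 * (sgn b * Posz (i == j : nat))) * m i.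
  rewrite (eq_bigr (fun i => - (2 * sgn b) * (Posz (i == j : nat) * m i))) => [|i _].
    by rewrite -mulr_sumr sum_delta; ring.
  by ring.
by apply: (tw_blk sigma_central) => i; apply: (tw_pw sigma_central (m i)); apply: tw_BA.
Qed.

Lemma nf_step (l : letter n g) (h : SD g) :
  [:: l] ++ nf s0 h =w nf s0 (sd_mul (sd_letter l) h).
Proof.
case: h => [[p m] k]; case: l => [[i|j|j] b].
- by rewrite sd_mul_sig [X in nf _ X]/= !nfE catA sig_letter -pw_add.
- rewrite sd_mul_a [X in nf _ X]/= !nfE -(pw_central sigma_central) (catA [:: _]) pw_letter.
  do 2 apply: weq_cat => //; apply: blk_shift => [|||i]; rewrite ?ffunE //.
  - exact: wc_AA.
  - exact: index_enum_uniq.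
  - exact: mem_index_enum.
- rewrite sd_mul_b [X in nf _ X]/= !nfE -(pw_central sigma_central) (catA [:: _]).
  rewrite (tw_B_blkA j b m) -!catA catA -pw_add pw_letter.
  do 2 apply: weq_cat => //; apply: blk_shift => [|||i]; rewrite ?ffunE //.
  - exact: wc_BB.
  - exact: index_enum_uniq.
  - exact: mem_index_enum.
Qed.

Lemma weq_nf (w : word n g) : w =w nf s0 (sd_eval w).
Proof.
elim: w => [|l w IH].
  by rewrite sd_eval0 nfE !blk0 // => i; rewrite ffunE.
by rewrite -cat1s {1}IH nf_step sd_eval_cons.
Qed.
End BraidConsequences.

Theorem mainTheorem3 (g n : nat) (hg : (1 <= g)%N) (hn : (3 <= n)%N) :
  (* SD g with sd_mul / sd_one / sd_inv is a group *)
  (forall x y z : SD g, sd_mul x (sd_mul y z) = sd_mul (sd_mul x y) z) /\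
      (forall x : SD g, sd_mul (sd_one g) x = x) /\
      (forall x : SD g, sd_mul (sd_inv x) x = sd_one g) /\
  [/\
  (* all sigma_i have the same class in B_n(Sigma_g)/Gamma_3 *)
      (forall i j : 'I_n.-1, weq [:: pos (Sig g i)] [:: pos (Sig g j)]),
  (* evaluation word -> SD g induces an isomorphism
     B_n(Sigma_g)/Gamma_3 ~= SD g, sigma_i |-> sigma, a_i |-> a_i, b_i |-> b_i *)
      (forall u v : word n g, weq u v <-> sd_eval u = sd_eval v)
    & (forall h : SD g, exists w : word n g, sd_eval w = h)].
Proof.
have lt0 : (0 < n.-1)%N by lia.
have lt1 : (1 < n.-1)%N by lia.
pose s0 : 'I_n.-1 := Ordinal lt0; pose s1 : 'I_n.-1 := Ordinal lt1.
have s0_E : s0 = 0%N :> nat by []; have s1_E : s1 = 1%N :> nat by [].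
split; first exact: sd_mulA; split; first exact: sd_mul1g.
split; first exact: sd_mulVg; split.
- by move=> i j; rewrite (sig_all g s0_E i) (sig_all g s0_E j).
- move=> u v; split; first exact: sd_eval_weq.
  by move=> uv; rewrite (weq_nf s0_E s1_E u) (weq_nf s0_E s1_E v) uv.
- by move=> h; exists (nf s0 h); apply: sd_eval_nf.
Qed.
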